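(* Let $S=K[x_0,x_1,x_2]$. For every integer $1\le d\le 6$, every saturated Borel ideal $I\subset S$ with Hilbert polynomial $p_{S/I}(z)=d$ is a hilb-segment ideal with respect to some term order. For every integer $d\ge7$ there exists a saturated Borel ideal $I\subset S$ with Hilbert polynomial $p_{S/I}(z)=d$ which is not a hilb-segment ideal with respect to any term order.
   Context: $K$ algebraically closed of characteristic $0$, standard grading, $x_0<x_1<x_2$; $\mathbb T_t$ is the set of terms of degree $t$. A monomial ideal is Borel if $x^\alpha\in I$, $\alpha_j>0$, $j<2$ imply $x^\alpha x_{j+1}/x_j\in I$. Given a term order $\preceq$, $B\subseteq\mathbb T_t$ is a segment if $\tau\in B$, $\tau'\in\mathbb T_t$, $\tau'\succ\tau$ imply $\tau'\in B$. A nonzero saturated Borel ideal $I$ is a hilb-segment ideal w.r.t. $\preceq$ if $I\cap\mathbb T_r$ is a segment, where $r$ is the Gotzmann number of the Hilbert polynomial of $S/I$; for a constant Hilbert polynomial $d$ the Gotzmann number is $d$. *)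

From mathcomp Require Import all_boot.
Set Implicit Arguments. Unset Strict Implicit. Unset Printing Implicit Defensive.

(* Terms of S = K[x0,x1,x2] are identified with exponent triples
   ((a0, a1), a2) standing for x0^a0 x1^a1 x2^a2.  The field K plays no role
   for monomial ideals (K algebraically closed, char 0 is a standing assumption). *)
Definition mon := (nat * nat * nat)%type.

Definition deg (m : mon) : nat := m.1.1 + m.1.2 + m.2.

Definition madd (m n : mon) : mon := (m.1.1 + n.1.1, m.1.2 + n.1.2, m.2 + n.2).

Definition terms (t : nat) : seq mon :=
  flatten [seq [seq (a, b, t - a - b) | b <- iota 0 (t - a).+1] | a <- iota 0 t.+1].

(* A monomial ideal of S, given by the (decidable) set of terms it contains. *)
Definition monomial_ideal (I : pred mon) : Prop :=
  forall m n, I m -> I (madd m n).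

Definition borel (I : pred mon) : Prop :=
  (forall a0 a1 a2, I (a0, a1, a2) -> 0 < a0 -> I (a0.-1, a1.+1, a2)) /\
  (forall a0 a1 a2, I (a0, a1, a2) -> 0 < a1 -> I (a0, a1.-1, a2.+1)).

(* Saturated: I = I : (x0,x1,x2)^infty (for monomial ideals, it suffices to test terms). *)
Definition saturated (I : pred mon) : Prop :=
  forall m, (exists k, forall n, deg n = k -> I (madd m n)) -> I m.

Definition hilb_fun (I : pred mon) (t : nat) : nat :=
  count (fun m => ~~ I m) (terms t).

Definition hilb_poly_const (I : pred mon) (d : nat) : Prop :=
  exists t0, forall t, t0 <= t -> hilb_fun I t = d.

(* Term order on the terms of S: a total order, compatible with multiplication,
   with 1 as minimum.  le m n means m "precedes or equals" n. *)
Definition term_order (le : mon -> mon -> Prop) : Prop :=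
  (forall m, le m m) /\
  (forall m n, le m n -> le n m -> m = n) /\
  (forall m n p, le m n -> le n p -> le m p) /\
  (forall m n, le m n \/ le n m) /\
  (forall m n p, le m n -> le (madd m p) (madd n p)) /\
  (forall m, le (0, 0, 0) m).

Definition segment (le : mon -> mon -> Prop) (t : nat) (B : pred mon) : Prop :=
  forall tau tau', deg tau = t -> deg tau' = t -> B tau -> le tau tau' -> B tau'.

(* Hilb-segment ideal, for an ideal whose Hilbert polynomial is the constant d:
   the Gotzmann number is then r = d, and I /\ T_r must be a segment. *)
Definition hilb_segment_const (I : pred mon) (d : nat) (le : mon -> mon -> Prop) : Prop :=
  [/\ (exists m, I m), saturated I, borel I & segment le d I].

(* A saturated Borel ideal I of K[x0,x1,x2] does not involve x0, and is then a
   staircase: x1^b x2^c lies in I iff b >= f c, where f decreases strictly until it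
   vanishes.  Its Hilbert function is sum_c min (f c) (t - c + 1), so the Hilbert
   polynomial is the area sum_c f c of the staircase.  For d <= 6 there are finitely
   many staircases of area d, and for each of them a weight on (x1, x2), refined
   lexicographically, puts every term of degree d in I above every term of degree d
   outside I.  For d >= 7 the staircases (4, 3) and (d - 3, 2, 1) admit terms
   s1, s2 outside I and t1, t2 in I, all of degree d, with s1 s2 = t1 t2; a segment
   would force s1 < t1 and s2 < t2, hence s1 s2 < t1 t2. *)

From mathcomp Require Import all_boot zify.
Set Implicit Arguments. Unset Strict Implicit. Unset Printing Implicit Defensive.

Lemma maddC : commutative madd.
Proof. by move=> [[a b] c] [[a' b'] c']; rewrite /madd /= addnC (addnC b) (addnC c). Qed.

Lemma maddI : right_injective madd.
Proof. by move=> [[a b] c] [[a' b'] c'] [[a'' b''] c''] [/addnI-> /addnI-> /addnI->]. Qed.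

Lemma segment_exchange (le : mon -> mon -> Prop) d (I : pred mon) s1 s2 t1 t2 :
  term_order le -> segment le d I ->
  deg s1 = d -> deg s2 = d -> deg t1 = d -> deg t2 = d ->
  ~~ I s1 -> ~~ I s2 -> I t1 -> I t2 -> madd s1 s2 <> madd t1 t2.
Proof.
move=> [_ [le_anti [_ [le_total [le_madd _]]]]] seg ds1 ds2 dt1 dt2 s1I s2I t1I t2I E.
have out_le_in s t : deg s = d -> deg t = d -> ~~ I s -> I t -> le s t.
  move=> ds dt sI tI; case: (le_total s t) => // ts.
  by move: sI; rewrite (seg t s dt ds tI ts).
have le1 := le_madd _ _ s2 (out_le_in _ _ ds1 dt1 s1I t1I).
have le2 := le_madd _ _ t1 (out_le_in _ _ ds2 dt2 s2I t2I).
rewrite E in le1; rewrite !(maddC _ t1) in le2.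
by move: s2I; rewrite -(maddI (le_anti _ _ le1 le2)) t2I.
Qed.

Lemma count_sum (T : Type) (a : pred T) (r : seq T) : count a r = \sum_(x <- r) a x.
Proof. by rewrite -sum1_count big_mkcond. Qed.

Definition mulx0 (m : mon) : mon := (m.1.1.+1, m.1.2, m.2).

Definition hilb_fun12 (I : pred mon) (k : nat) : nat :=
  count (fun b => ~~ I (0, b, k - b)) (iota 0 k.+1).

Lemma count_terms_succ (P : pred mon) t :
  count P (terms t.+1) =
  count (fun b => P (0, b, t.+1 - b)) (iota 0 t.+2) + count (P \o mulx0) (terms t).
Proof.
have iotaS : iota 0 t.+2 = 0 :: [seq x.+1 | x <- iota 0 t.+1].
  by rewrite -[iota 0 t.+2]/(0 :: iota (1 + 0) t.+1) iotaDl.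
rewrite {1}/terms iotaS allpairs_cons count_cat count_map subn0; congr (_ + _).
  by rewrite iotaS.
rewrite /terms allpairs_mapl -[RHS]count_map map_allpairs.
by congr (count P (flatten _)); apply: eq_map => a; apply: eq_map => b; rewrite /mulx0 /= subSS.
Qed.

Lemma hilb_fun0 (I : pred mon) : hilb_fun I 0 = hilb_fun12 I 0.
Proof. by []. Qed.

Lemma hilb_fun_succ (I : pred mon) t : (forall m, I (mulx0 m) = I m) ->
  hilb_fun I t.+1 = hilb_fun12 I t.+1 + hilb_fun I t.
Proof.
move=> Ix0; rewrite /hilb_fun count_terms_succ; congr (_ + _).
by apply: eq_count => m /=; rewrite Ix0.
Qed.

Definition staircase (f : nat -> nat) : pred mon := fun m => f m.2 <= m.1.2.

(* Since [0.-1 = 0], a stair function decreases strictly until it vanishes. *)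
Definition stair (f : nat -> nat) : Prop := forall c, f c.+1 <= (f c).-1.

Definition stair_seq (s : seq nat) : bool :=
  all (fun c => nth 0 s c.+1 <= (nth 0 s c).-1) (iota 0 (size s)).

Section Staircase.
Variable f : nat -> nat.

Lemma staircase_saturated : saturated (staircase f).
Proof. by move=> [[a b] c] [k /(_ (k, 0, 0))]; rewrite /deg /staircase /madd /= !addn0; apply. Qed.

Hypothesis stair_f : stair f.

Lemma stair_anti c k : f (c + k) <= f c.
Proof.
elim: k => [|k IH]; first by rewrite addn0.
by rewrite addnS (leq_trans (stair_f _)) // (leq_trans (leq_pred _)).
Qed.

Lemma staircase_ideal : monomial_ideal (staircase f).
Proof.
move=> [[a b] c] [[a' b'] c']; rewrite /staircase /madd /= => fb.
by rewrite (leq_trans (stair_anti _ _)) // (leq_trans fb) ?leq_addr.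
Qed.

Lemma staircase_borel : borel (staircase f).
Proof.
rewrite /staircase; split=> a0 a1 a2 /= fa1 a_gt0; first exact: leqW.
by rewrite (leq_trans (stair_f _)) //; lia.
Qed.

End Staircase.

Lemma minnSr x m : minn x m.+1 = (m < x) + minn x m.
Proof. by case: ltnP; lia. Qed.

Section StaircaseHilbert.
Variable f : nat -> nat.

Lemma hilb_fun12_staircase k : hilb_fun12 (staircase f) k = \sum_(c < k.+1) (k - c < f c).
Proof.
rewrite /hilb_fun12 count_sum -[iota 0 k.+1]/(index_iota 0 k.+1) big_rev_mkord subn0.
by apply: eq_bigr => c _; rewrite /staircase /= -ltnNge subSS subKn // -ltnS.
Qed.

Lemma hilb_fun_staircase t : hilb_fun (staircase f) t = \sum_(c < t.+1) minn (f c) (t - c).+1.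
Proof.
elim: t => [|t IH].
  by rewrite hilb_fun0 hilb_fun12_staircase !big_ord1 minnSr minn0 addn0.
rewrite hilb_fun_succ // hilb_fun12_staircase IH [X in X + _]big_ord_recr [RHS]big_ord_recr /=.
rewrite subnn [minn _ 1]minnSr minn0 addn0 addnAC -big_split; congr (_ + _).
have step c : c <= t -> (t.+1 - c < f c) + minn (f c) (t - c).+1 = minn (f c) (t.+1 - c).+1.
  by move=> ct; rewrite subSn // [RHS]minnSr.
by apply: eq_bigr => c _; apply: step (ltn_ord c).
Qed.

Lemma hilb_fun_staircase_large n t : (forall c, n <= c -> f c = 0) ->
  n + \sum_(c < n) f c <= t -> hilb_fun (staircase f) t = \sum_(c < n) f c.
Proof.
move=> f0 t_large; rewrite hilb_fun_staircase.
have n_le_t : n <= t.+1 by lia.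
rewrite (big_ord_widen t.+1 f n_le_t) [RHS]big_mkcond; apply: eq_bigr => c _.
case: ltnP => [cn | /f0 ->]; last exact: min0n.
have fc_le : f c <= \sum_(i < n) f i by rewrite (bigD1 (Ordinal cn)) //= leq_addr.
apply/minn_idPl; have := ltn_ord c; lia.
Qed.

End StaircaseHilbert.

Lemma hilb_poly_staircase s : hilb_poly_const (staircase (nth 0 s)) (sumn s).
Proof.
have -> : sumn s = \sum_(c < size s) nth 0 s c by rewrite sumnE (big_nth 0) big_mkord.
exists (size s + \sum_(c < size s) nth 0 s c) => t t_large.
by apply: hilb_fun_staircase_large => // c /(nth_default 0).
Qed.

Lemma hilb_poly_const_uniq (I : pred mon) d d' :
  hilb_poly_const I d -> hilb_poly_const I d' -> d = d'.
Proof.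
move=> [t0 h0] [t1 h1].
by rewrite -(h0 (maxn t0 t1)) ?leq_maxl // h1 ?leq_maxr.
Qed.

Lemma eq_hilb_fun (I J : pred mon) : I =1 J -> hilb_fun I =1 hilb_fun J.
Proof. by move=> IJ t; apply: eq_count => m; rewrite IJ. Qed.

Section SaturatedBorel.
Variable I : pred mon.
Hypothesis I_ideal : monomial_ideal I.
Hypothesis I_borel : borel I.
Hypothesis I_sat : saturated I.

Lemma borel_x0x1 a b c x : I (a, b, c) -> x <= a -> I (a - x, b + x, c).
Proof.
move=> abcI; elim: x => [|x IH] xa; first by rewrite subn0 addn0.
have := I_borel.1 _ _ _ (IH (ltnW xa)); rewrite subn_gt0 => /(_ xa).
by rewrite subnS addnS.
Qed.

Lemma borel_x1x2 a b c y : I (a, b, c) -> y <= b -> I (a, b - y, c + y).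
Proof.
move=> abcI; elim: y => [|y IH] yb; first by rewrite subn0 addn0.
have := I_borel.2 _ _ _ (IH (ltnW yb)); rewrite subn_gt0 => /(_ yb).
by rewrite subnS addnS.
Qed.

(* x1^b x2^c * x0^i x1^j x2^l, with i + j + l = a, arises from x0^a x1^b x2^c by
   Borel moves, so saturation puts x1^b x2^c in I. *)
Lemma mem_x0_free a b c : I (a, b, c) = I (0, b, c).
Proof.
apply/idP/idP => [abcI|]; last by move/(I_ideal (a, 0, 0)); rewrite /madd /= !addn0.
apply: I_sat; exists a => -[[i j] l]; rewrite /deg /madd /= add0n => deg_a.
have := borel_x0x1 (x := j + l) abcI; rewrite -deg_a -addnA addnK => /(_ (leq_addl _ _)).
by move/borel_x1x2 => /(_ l); rewrite addnA addnK; apply; rewrite leq_addl.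
Qed.

Lemma mem_mulx0 m : I (mulx0 m) = I m.
Proof. by case: m => [[a b] c]; rewrite (mem_x0_free a.+1) (mem_x0_free a). Qed.

Lemma nmem_x1_pow b c : ~~ I (0, b, c) -> ~~ I (0, b + c, 0).
Proof.
elim: c b => [|c IH] b bcI; first by rewrite addn0.
rewrite -addSnnS; apply: IH; apply: contra bcI => /I_borel.2; exact.
Qed.

Lemma nmem_x1_pow_le j k : ~~ I (0, k, 0) -> j <= k -> ~~ I (0, j, 0).
Proof.
move=> kI jk; apply: contra kI => /(I_ideal (0, k - j, 0)).
by rewrite /madd /= subnKC.
Qed.

Lemma hilb_fun_gt_min k t : ~~ I (0, k, 0) -> minn t k < hilb_fun I t.
Proof.
move=> kI; have row_pos j : j <= k -> 0 < hilb_fun12 I j.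
  move=> jk; rewrite /hilb_fun12 -has_count; apply/hasP; exists j.
    by rewrite mem_iota leq0n add0n ltnSn.
  by rewrite subnn (nmem_x1_pow_le kI jk).
elim: t => [|t IH]; first by rewrite hilb_fun0 min0n row_pos.
rewrite hilb_fun_succ; last exact: mem_mulx0.
by case: (leqP k t) => [kt | /row_pos]; lia.
Qed.

Variable d : nat.
Hypothesis I_hilb : hilb_poly_const I d.

Lemma nmem_deg_lt b c : ~~ I (0, b, c) -> b + c < d.
Proof.
move/nmem_x1_pow/hilb_fun_gt_min => gt_min; case: I_hilb => t0 hilb_d.
by have := gt_min (maxn t0 (b + c)); rewrite hilb_d ?leq_maxl //; lia.
Qed.

Lemma mem_deg_ge a b c : d <= b + c -> I (a, b, c).
Proof. by rewrite mem_x0_free leqNgt; apply: contraNT; apply: nmem_deg_lt. Qed.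

Definition staircase_of (c : nat) : nat := find (fun b => I (0, b, c)) (iota 0 d.+1).

Lemma has_staircase_of c : has (fun b => I (0, b, c)) (iota 0 d.+1).
Proof.
by apply/hasP; exists d; [rewrite mem_iota add0n ltnSn | apply: mem_deg_ge; rewrite leq_addr].
Qed.

Lemma staircase_of_le c : staircase_of c <= d.
Proof. by have := has_staircase_of c; rewrite has_find size_iota. Qed.

Lemma mem_staircase_of : I =1 staircase staircase_of.
Proof.
move=> [[a b] c]; rewrite /staircase /= mem_x0_free.
have F_lt : staircase_of c < d.+1 := staircase_of_le c.
case: (leqP (staircase_of c) b) => [Fb | bF].
  have := nth_find 0 (has_staircase_of c); rewrite nth_iota // add0n.
  by move/(I_ideal (0, b - staircase_of c, 0)); rewrite /madd /= !addn0 subnKC // => ->.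
by have := before_find 0 bF; rewrite nth_iota ?add0n ?(ltn_trans bF) // => /negbTE.
Qed.

Lemma staircase_of_stair : stair staircase_of.
Proof.
move=> c; change (staircase staircase_of (0, (staircase_of c).-1, c.+1)).
have Fc_in : I (0, staircase_of c, c) by rewrite mem_staircase_of /staircase /=.
rewrite -mem_staircase_of; case: (posnP (staircase_of c)) => [F0 | F_gt0].
  by move: Fc_in => /(I_ideal (0, 0, 1)); rewrite /madd /= addn1 F0.
exact: I_borel.2 Fc_in F_gt0.
Qed.

Lemma staircase_of_eq0 c : d <= c -> staircase_of c = 0.
Proof.
move=> dc; apply/eqP; rewrite -leqn0 -[_ <= _]/(staircase staircase_of (0, 0, c)).
by rewrite -mem_staircase_of mem_deg_ge.
Qed.

Lemma staircase_seq_of n : d <= n ->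
  exists s, [/\ I =1 staircase (nth 0 s), size s = n, all (fun x => x <= d) s,
                 stair_seq s & sumn s = d].
Proof.
move=> dn; exists (mkseq staircase_of n).
have nth_s : nth 0 (mkseq staircase_of n) =1 staircase_of.
  move=> c; case: (ltnP c n) => cn; first by rewrite nth_mkseq.
  by rewrite nth_default ?size_mkseq // staircase_of_eq0 // (leq_trans dn).
have I_s : I =1 staircase (nth 0 (mkseq staircase_of n)).
  by move=> m; rewrite mem_staircase_of /staircase nth_s.
split=> //; first exact: size_mkseq.
- by apply/allP => _ /mapP[c _ ->]; apply: staircase_of_le.
- by apply/allP => c _; rewrite !nth_s staircase_of_stair.
apply: hilb_poly_const_uniq (hilb_poly_staircase _) _.
by case: I_hilb => t0 hilb_d; exists t0 => t /hilb_d <-; rewrite (eq_hilb_fun I_s).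
Qed.

End SaturatedBorel.

Definition weight (w : nat * nat) (m : mon) : nat := w.1 * m.1.2 + w.2 * m.2.

Definition lex_le (m n : mon) : Prop :=
  m.1.1 < n.1.1 \/ (m.1.1 = n.1.1 /\ (m.1.2 < n.1.2 \/ (m.1.2 = n.1.2 /\ m.2 <= n.2))).

Definition weight_le (w : nat * nat) (m n : mon) : Prop :=
  weight w m < weight w n \/ (weight w m = weight w n /\ lex_le m n).

Lemma weightD w m n : weight w (madd m n) = weight w m + weight w n.
Proof. by case: m n => [[a b] c] [[a' b'] c']; rewrite /weight /=; lia. Qed.

Lemma weight_le_term_order w : term_order (weight_le w).
Proof.
rewrite /term_order /weight_le /lex_le.
split; [|split; [|split; [|split; [|split]]]].
- by move=> m; right; lia.
- move=> [[a b] c] [[a' b'] c'] /=.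
  by move: (weight w _) (weight w _) => x y le1 le2; congr (_, _, _); lia.
- move=> m n p; move: (weight w m) (weight w n) (weight w p) => x y z; lia.
- move=> m n; move: (weight w m) (weight w n) => x y; lia.
- move=> [[a b] c] [[a' b'] c'] [[a'' b''] c'']; rewrite !weightD /=.
  move: (weight w (a, b, c)) (weight w (a', b', c')) (weight w (a'', b'', c'')) => x y z; lia.
- move=> [[a b] c]; have -> : weight w (0, 0, 0) = 0 by rewrite /weight !muln0.
  by move: (weight w _) => x /=; lia.
Qed.

Lemma mem_terms m : m \in terms (deg m).
Proof.
case: m => [[a b] c]; rewrite /deg /=; set t := a + b + c.
have -> : c = t - a - b by rewrite /t; lia.
by apply: allpairs_f_dep; rewrite mem_iota /t; lia.
Qed.

Definition separates (w : nat * nat) (I : pred mon) (t : nat) : bool :=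
  all (fun m => all (fun n => I m ==> I n || (weight w n < weight w m)) (terms t)) (terms t).

Lemma separates_segment w (I : pred mon) t :
  separates w I t -> segment (weight_le w) t I.
Proof.
move=> sep m n dm dn mI mn; subst t; apply/negPn/negP => nI.
move: sep => /allP/(_ m (mem_terms m))/allP/(_ n); rewrite -dn mem_terms mI (negbTE nI).
by move/(_ isT); move: mn; rewrite /weight_le; lia.
Qed.

Fixpoint all_seqs_below (n k : nat) (P : pred (seq nat)) : bool :=
  if n is n'.+1 then all (fun x => all_seqs_below n' k (fun s => P (x :: s))) (iota 0 k)
  else P [::].

Lemma all_seqs_belowP n k (P : pred (seq nat)) s :
  all_seqs_below n k P -> size s = n -> all (fun x => x < k) s -> P s.
Proof.
elim: n P s => [|n IH] P [|x s] //= P_all [size_s] /andP[xk s_lt].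
by move/allP: P_all => /(_ x); rewrite mem_iota xk => /(_ isT)/IH; apply.
Qed.

Definition weights : seq (nat * nat) :=
  [:: (1, 1); (1, 2); (1, 3); (1, 4); (1, 5); (1, 6); (2, 3)].

(* The test is an [if] rather than [==>] so that, under call-by-value evaluation,
   separation is only computed for the few genuine staircases. *)
Lemma small_staircases_separated :
  all (fun d => all_seqs_below 6 7 (fun s =>
         if stair_seq s && (sumn s == d)
         then has (fun w => separates w (staircase (nth 0 s)) d) weights else true))
      (iota 1 6).
Proof. by vm_compute. Qed.

Lemma small_borel_hilb_segment d : 1 <= d <= 6 ->
  forall I : pred mon,
    monomial_ideal I -> borel I -> saturated I -> hilb_poly_const I d ->
    exists le : mon -> mon -> Prop, term_order le /\ hilb_segment_const I d le.
Proof.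
move=> d_range I I_ideal I_borel I_sat I_hilb; have /andP[_ d_le6] := d_range.
have [s [I_s size_s s_le stair_s sum_s]] := staircase_seq_of I_ideal I_borel I_sat I_hilb d_le6.
have s_lt7 : all (fun x => x < 7) s by apply/allP => x /(allP s_le) /leq_ltn_trans; apply.
have /allP/(_ d) := small_staircases_separated; rewrite mem_iota add1n ltnS d_range.
move=> /(_ isT)/all_seqs_belowP/(_ size_s s_lt7); rewrite stair_s sum_s eqxx.
move=> /hasP[w _ /separates_segment seg_s].
exists (weight_le w); split; first exact: weight_le_term_order.
split=> //.
  by exists (0, d, 0); apply: (mem_deg_ge I_ideal I_borel I_sat I_hilb); rewrite addn0.
by move=> m n dm dn; rewrite !I_s; apply: seg_s.
Qed.

Lemma staircase_counterexample s d s1 s2 t1 t2 (J := staircase (nth 0 s)) :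
  stair (nth 0 s) -> sumn s = d ->
  deg s1 = d -> deg s2 = d -> deg t1 = d -> deg t2 = d ->
  ~~ J s1 -> ~~ J s2 -> J t1 -> J t2 -> madd s1 s2 = madd t1 t2 ->
  exists I : pred mon,
    [/\ monomial_ideal I, borel I, saturated I, hilb_poly_const I d &
        forall le : mon -> mon -> Prop, term_order le -> ~ hilb_segment_const I d le].
Proof.
move=> stair_s <- ds1 ds2 dt1 dt2 s1J s2J t1J t2J E; exists J; split.
- exact: staircase_ideal.
- exact: staircase_borel.
- exact: staircase_saturated.
- exact: hilb_poly_staircase.
move=> le le_order [_ _ _ seg].
exact: (segment_exchange le_order seg ds1 ds2 dt1 dt2 s1J s2J t1J t2J E).
Qed.

Lemma large_borel_not_hilb_segment d : 7 <= d ->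
  exists I : pred mon,
    [/\ monomial_ideal I, borel I, saturated I, hilb_poly_const I d &
        forall le : mon -> mon -> Prop, term_order le -> ~ hilb_segment_const I d le].
Proof.
rewrite leq_eqVlt => /orP[/eqP <- | d_ge8].
  apply: (@staircase_counterexample [:: 4; 3] 7 (4, 2, 1) (4, 2, 1) (3, 4, 0) (5, 0, 2)) => //.
  by case=> [|[|c]].
apply: (@staircase_counterexample [:: d - 3; 2; 1] d
          (d - 2, 0, 2) (4, d - 4, 0) (d - 3, 2, 1) (5, d - 6, 1));
  rewrite /staircase /deg /madd /=; try lia.
- by case=> [|[|[|c]]] /=; rewrite ?nth_nil //; lia.
- by congr (_, _, _); lia.
Qed.

Theorem mainTheorem6 :
  (forall d : nat, 1 <= d <= 6 ->
     forall I : pred mon,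
       monomial_ideal I -> borel I -> saturated I -> hilb_poly_const I d ->
       exists le : mon -> mon -> Prop, term_order le /\ hilb_segment_const I d le)
  /\
  (forall d : nat, 7 <= d ->
     exists I : pred mon,
       [/\ monomial_ideal I, borel I, saturated I, hilb_poly_const I d &
           forall le : mon -> mon -> Prop, term_order le -> ~ hilb_segment_const I d le]).
Proof. exact: (conj small_borel_hilb_segment large_borel_not_hilb_segment). Qed.
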